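(* Let $A,B\in \mathbb{R}^{m\times n}$ with $m<n$ and $b\in \mathbb{R}^m$. If the equation $Ax-B|x|=b$ has a solution with more than $m$ nonzero entries, then it has infinitely many solutions with the same sign pattern as that known solution.
   Context: $|x|$ is the entrywise absolute value. Two vectors have the same sign pattern if their entrywise signs (in $\{-1,0,1\}$) agree. *)

From mathcomp Require Import all_boot all_order all_algebra.
Set Implicit Arguments. Unset Strict Implicit. Unset Printing Implicit Defensive.
Import Order.TTheory GRing.Theory Num.Theory.
Local Open Scope ring_scope.

Definition mabs (R : numDomainType) (m n : nat) (x : 'M[R]_(m, n)) : 'M[R]_(m, n) :=
  \matrix_(i, j) `|x i j|.

Definition nnz (R : numDomainType) (n : nat) (x : 'cV[R]_n) : nat :=
  #|[set i : 'I_n | x i 0 != 0]|.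

Definition same_sign (R : numDomainType) (n : nat) (x y : 'cV[R]_n) : Prop :=
  forall i : 'I_n, Num.sg (x i 0) = Num.sg (y i 0).

Definition ave_sol (R : numDomainType) (m n : nat)
  (A B : 'M[R]_(m, n)) (b : 'cV[R]_m) (x : 'cV[R]_n) : Prop :=
  A *m x - B *m mabs x = b.

(* a predicate has infinitely many elements: it is not contained in any finite list *)
Definition infinitely_many (T : eqType) (P : T -> Prop) : Prop :=
  forall s : seq T, exists x, P x /\ x \notin s.

(* For x with the sign pattern of x0 we have |x| = diag(sg x0) x, so on that set
   the absolute value equation is the linear system (A - B diag(sg x0)) x = b.  The more
   than m columns of this m-row matrix indexed by the support of x0 are linearly
   dependent, which gives a nonzero kernel vector v supported on that support; then
   x0 + t v solves the equation and keeps the sign pattern of x0 for all small t. *)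
From mathcomp Require Import all_boot all_order all_algebra.
From mathcomp Require Import reals.
Set Implicit Arguments. Unset Strict Implicit. Unset Printing Implicit Defensive.
Import Order.TTheory GRing.Theory Num.Theory.
Local Open Scope ring_scope.

Lemma sgr_add_small (R : realDomainType) (x y : R) :
  `|y| < `|x| -> Num.sg (x + y) = Num.sg x.
Proof.
move=> lt_yx; have [x_lt0|x_gt0|x0] := ltrgtP x 0.
- move: lt_yx; rewrite (ltr0_norm x_lt0) => /ltr_normlP[_ lt_yNx].
  by rewrite !ltr0_sg // -ltrBrDl sub0r.
- move: lt_yx; rewrite (gtr0_norm x_gt0) => /ltr_normlP[lt_Nyx _].
  by rewrite !gtr0_sg // -ltrBlDr sub0r.
- by move: lt_yx; rewrite x0 normr0 ltNge normr_ge0.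
Qed.

Definition sg_mx (R : numDomainType) n (x : 'cV[R]_n) : 'M[R]_n :=
  diag_mx (\row_j Num.sg (x j 0)).

Lemma mabs_same_sign (R : realDomainType) n (x y : 'cV[R]_n) :
  same_sign x y -> mabs x = sg_mx y *m x.
Proof.
move=> sxy; apply/matrixP => i j.
by rewrite /mabs mul_diag_mx !mxE (ord1 j) -sxy normrEsg.
Qed.

Lemma ave_sol_same_sign (R : realDomainType) m n (A B : 'M[R]_(m, n)) b (x x0 : 'cV[R]_n) :
  same_sign x x0 -> ave_sol A B b x = ((A - B *m sg_mx x0) *m x = b).
Proof. by move=> sx; rewrite /ave_sol (mabs_same_sign sx) mulmxA -mulmxBl. Qed.

Lemma kernel_vector_wide (F : fieldType) m k (M : 'M[F]_(m, k)) :
  (m < k)%N -> exists2 w : 'cV[F]_k, w != 0 & M *m w = 0.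
Proof.
move=> lt_mk; have : kermx M^T != 0.
  by rewrite kermx_eq0 /row_free ltn_eqF // (leq_ltn_trans (rank_leq_col _) lt_mk).
case/rowV0Pn => u /sub_kermxP uM u0; exists u^T; first by rewrite trmx_eq0.
by rewrite -[M]trmxK -trmx_mul uM trmx0.
Qed.

Lemma kernel_vector_supported (F : fieldType) m n (C : 'M[F]_(m, n)) (S : {set 'I_n}) :
  (m < #|S|)%N ->
  exists v : 'cV[F]_n, [/\ v != 0, C *m v = 0 & forall j, j \notin S -> v j 0 = 0].
Proof.
move=> lt_mS; pose E : 'M[F]_(n, #|S|) := colsub enum_val 1%:M.
have trE_E : E^T *m E = 1%:M.
  rewrite trmx_mxsub trmx1 -mxsub_mul mulmx1.
  by apply/matrixP => i i'; rewrite !mxE (inj_eq enum_val_inj).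
have [w w0 CEw] := kernel_vector_wide (C *m E) lt_mS.
exists (E *m w); split; last 1 first.
- move=> j jS; rewrite mxE big1 // => i _; rewrite !mxE.
  have /negPf-> : j != enum_val i by apply: contraNneq jS => ->; apply: enum_valP.
  by rewrite mul0r.
- by apply: contraNneq w0 => Ew0; rewrite -[w]mul1mx -trE_E -mulmxA Ew0 mulmx0.
- by rewrite mulmxA.
Qed.

Lemma same_sign_perturbation (R : realFieldType) n (x v : 'cV[R]_n) :
  (forall j, x j 0 = 0 -> v j 0 = 0) ->
  exists2 d : R, 0 < d & forall t, `|t| < d -> same_sign (x + t *: v) x.
Proof.
move=> vx; have v1_gt0 j : 0 < `|v j 0| + 1 by rewrite ltr_wpDl.
pose d := \big[Order.min/1]_(j | x j 0 != 0) (`|x j 0| / (`|v j 0| + 1)).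
exists d => [|t td j].
  by apply: lt_bigmin => // j xj; rewrite divr_gt0 ?normr_gt0.
rewrite !mxE; have [xj0|xj] := eqVneq (x j 0) 0.
  by rewrite xj0 (vx _ xj0) mulr0 addr0.
apply: sgr_add_small; rewrite normrM.
apply: (@le_lt_trans _ _ (`|t| * (`|v j 0| + 1))); first by rewrite mulrDr mulr1 lerDl.
by rewrite -ltr_pdivlMr // (lt_le_trans td) // bigmin_le_cond.
Qed.

Lemma sub_infinitely_many (T : eqType) (P Q : T -> Prop) :
  (forall x, P x -> Q x) -> infinitely_many P -> infinitely_many Q.
Proof. by move=> PQ infP s; have [x [/PQ Qx xs]] := infP s; exists x. Qed.

Lemma infinitely_many_inj (T : eqType) (P : T -> Prop) (f : nat -> T) :
  injective f -> (forall N, P (f N)) -> infinitely_many P.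
Proof.
move=> f_inj Pf s; have : ~~ all (mem s) (map f (iota 0 (size s).+1)).
  apply/allP => /(uniq_leq_size _); rewrite map_inj_uniq // iota_uniq.
  by rewrite size_map size_iota ltnn => /(_ isT).
by case/allPn => _ /mapP[N _ ->] fNs; exists (f N).
Qed.

Lemma infinitely_many_segment (R : numFieldType) n (x v : 'cV[R]_n) (d : R) :
  0 < d -> v != 0 ->
  infinitely_many (fun y => exists2 t : R, `|t| < d & y = x + t *: v).
Proof.
move=> d_gt0 v0; apply: (@infinitely_many_inj _ _ (fun N => x + (d / N.+2%:R) *: v)).
  move=> N M /addrI/eqP; rewrite -subr_eq0 -scalerBl scaler_eq0 (negPf v0) orbF subr_eq0.
  by move=> /eqP/(mulfI (lt0r_neq0 d_gt0))/invr_inj/eqP; rewrite eqr_nat => /eqP[].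
move=> N; exists (d / N.+2%:R) => //.
by rewrite ger0_norm ?divr_ge0 ?ltW // ltr_pdivrMr // ltr_pMr // ltr1n.
Qed.

Theorem corollary3p2 (R : realType) (m n : nat) (A B : 'M[R]_(m, n))
  (b : 'cV[R]_m) (x0 : 'cV[R]_n) :
  (m < n)%N ->
  ave_sol A B b x0 ->
  (m < nnz x0)%N ->
  infinitely_many (fun x : 'cV[R]_n => ave_sol A B b x /\ same_sign x x0).
Proof.
move=> _ x0_sol lt_m_supp.
set C := A - B *m sg_mx x0.
have Cx0 : C *m x0 = b by rewrite -ave_sol_same_sign.
have [v [v0 Cv v_supp]] := kernel_vector_supported C lt_m_supp.
have v_supp_x0 j : x0 j 0 = 0 -> v j 0 = 0.
  by move=> xj0; apply: v_supp; rewrite inE xj0 eqxx.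
have [d d_gt0 sign_d] := same_sign_perturbation v_supp_x0.
apply: sub_infinitely_many (infinitely_many_segment x0 d_gt0 v0) => _ [t td ->].
have sign_t := sign_d t td; split=> //.
by rewrite (ave_sol_same_sign _ _ _ sign_t) mulmxDr -scalemxAr Cv scaler0 addr0.
Qed.
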